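(* Fix $\rho>0$. There exists a constant $C=C(\rho)$ such that for all positive integers $K,L$, letting $\tilde I\subset\mathbb{Z}$ be an interval of $M=LK$ consecutive sites written as the union of $L$ disjoint intervals $I_1,\dots,I_L$ of $K$ consecutive sites each, with $\mathcal{M}_j=\sigma\big(\sum_{x\in I_j}\eta(x)\big)$ and $\tilde{\mathcal{M}}=\sigma\big(\sum_{x\in\tilde I}\eta(x)\big)$, the random variable $$V_2(\eta)=\sum_{j=1}^{L}E_{\nu_\rho}\Big(\sum_{x\in I_j}V_g(\eta(x))\,\Big|\,\mathcal{M}_j\Big)-E_{\nu_\rho}\Big(\sum_{x\in\tilde I}V_g(\eta(x))\,\Big|\,\tilde{\mathcal{M}}\Big)$$ satisfies $\mathrm{Var}(V_2,\nu_\rho)\le CL$.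
   Context: $g(k)=1_{\{k\ge1\}}$ for $k\in\mathbb{N}=\{0,1,2,\dots\}$. $\nu_\rho$ is the product measure on $\mathbb{N}^{\mathbb{Z}}$ with geometric marginals $\nu_\rho(\eta(x)=k)=\frac{1}{1+\rho}\big(\frac{\rho}{1+\rho}\big)^k$, $k\ge0$ (mean $\rho$). $\phi(\rho)=E_{\nu_\rho}[g(\eta(0))]=\frac{\rho}{1+\rho}$ and $V_g(\eta(x))=g(\eta(x))-\phi(\rho)-\phi'(\rho)[\eta(x)-\rho]$. *)

From Stdlib Require Import Reals Lra ZArith.
Open Scope R_scope.

(** Geometric marginal of nu_rho: P(eta(x)=k) = 1/(1+rho) (rho/(1+rho))^k. *)
Definition geom (rho : R) (k : nat) : R := (1 / (1 + rho)) * (rho / (1 + rho)) ^ k.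

Definition g (k : nat) : R := match k with O => 0 | S _ => 1 end.

(** phi(rho) = E_{nu_rho}[g] = rho/(1+rho), and its derivative. *)
Definition phi (rho : R) : R := rho / (1 + rho).
Definition phi' (rho : R) : R := 1 / (1 + rho) ^ 2.

Lemma phi_as_fct : phi = (id / (fct_cte 1 + id))%F.
Proof. reflexivity. Qed.

Lemma phi'_is_derivative (rho : R) : 0 <= rho -> derivable_pt_lim phi rho (phi' rho).
Proof.
  intros Hr.
  assert (H1 : 1 + rho <> 0) by lra.
  assert (E : phi = (id / (fct_cte 1 + id))%F).
  { exact phi_as_fct. }
  rewrite E; unfold phi'.
  replace (1 / (1 + rho) ^ 2) with ((1 * (fct_cte 1 + id)%F rho - (0 + 1) * id rho) / Rsqr ((fct_cte 1 + id)%F rho))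
    by (unfold fct_cte, id, plus_fct, Rsqr; simpl; field; auto).
  apply derivable_pt_lim_div.
  - apply derivable_pt_lim_id.
  - apply derivable_pt_lim_plus; [apply derivable_pt_lim_const | apply derivable_pt_lim_id].
  - unfold fct_cte, id, plus_fct; exact H1.
Qed.

Definition Vg (rho : R) (k : nat) : R := g k - phi rho - phi' rho * (INR k - rho).

Definition upd (eta : Z -> nat) (a : Z) (k : nat) : Z -> nat :=
  fun x => if Z.eq_dec x a then k else eta x.

Definition zero_conf : Z -> nat := fun _ => O.

Fixpoint wsum (rho : R) (N : nat) (a : Z) (n : nat) (F : (Z -> nat) -> R)
  (eta : Z -> nat) : R :=
  match n with
  | O => F eta
  | S m => sum_f_R0 (fun k => geom rho k * wsum rho N (a + 1)%Z m F (upd eta a k)) N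
  end.

(** Truncated nu_rho-expectation of F (depending only on sites a..a+n-1) over
    the box {0..N}^{[a,a+n)}.  As N -> infinity this converges to E_{nu_rho}[F]
    for integrable F, and for F >= 0 it increases to E_{nu_rho}[F]. *)
Definition box_exp (rho : R) (N : nat) (a : Z) (n : nat) (F : (Z -> nat) -> R) : R :=
  wsum rho N a n F zero_conf.

Fixpoint blocksum (eta : Z -> nat) (a : Z) (n : nat) : nat :=
  match n with O => O | S m => (eta a + blocksum eta (a + 1)%Z m)%nat end.

Fixpoint sumVg (rho : R) (eta : Z -> nat) (a : Z) (n : nat) : R :=
  match n with O => 0 | S m => Vg rho (eta a) + sumVg rho eta (a + 1)%Z m end.

(** Conditional expectation E_{nu_rho}(f | sigma(sum_{x in [a,a+n)} eta(x)))
    for f depending only on the sites of the block [a,a+n): on the event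
    {sum = s} it equals E[f 1_{sum=s}] / nu_rho(sum = s); only configurations
    with values <= s contribute, so the sums are finite. *)
Definition condE (rho : R) (a : Z) (n : nat) (f : (Z -> nat) -> R) (eta : Z -> nat) : R :=
  let s := blocksum eta a n in
  box_exp rho s a n (fun xi => if Nat.eqb (blocksum xi a n) s then f xi else 0)
  / box_exp rho s a n (fun xi => if Nat.eqb (blocksum xi a n) s then 1 else 0).

Fixpoint rsum (f : nat -> R) (n : nat) : R :=
  match n with O => 0 | S m => rsum f m + f m end.

(** V_2 for tilde I = [a, a+LK), I_j = [a+(j-1)K, a+jK), j = 1..L. *)
Definition V2 (rho : R) (a : Z) (K L : nat) (eta : Z -> nat) : R :=
  rsum (fun j =>
          let b := (a + Z.of_nat (j * K))%Z in
          condE rho b K (fun xi => sumVg rho xi b K) eta) L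
  - condE rho a (L * K) (fun xi => sumVg rho xi a (L * K)) eta.

From Stdlib Require Import Reals Lra Lia ZArith.
Open Scope R_scope.

(** Write [S_j] for the particle number of the block [I_j] and [S] for that of the
    big box.  Under [nu_rho] all configurations of a block with a given particle
    number [s] have the same weight, so conditioning on [s] makes the block uniform
    over the compositions of [s]; since [g] is the occupation indicator this gives
    [E(sum V_g | s) = f_n(s) - n phi - phi' (s - n rho)] with [f_n(s) = n s/(s+n-1)]
    (ratio of binomial coefficients).  The linear parts cancel and
        [V_2 = sum_j f_K(S_j) - f_(LK)(S)].
    Linearising each [f_n] at the mean [n mu] costs an error of size
    [(s - n mu)^2 / n], whose second moment is [O(1)] by the fourth central moment
    bound for sums of i.i.d. sites; the two tangent slopes differ by [O(1/K)].  So
    [V_2 - const] is a sum of [L] independent centred terms of variance [O(1)], a term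
    of variance [O(1)] and [O(1/K) (S - LK mu)], of variance [O(L)].

    The statement is about expectations truncated to boxes [{0..N}]; we prove the
    bound at every truncation level [M] (with [mu] the mean of the truncated,
    renormalised site law) around a suitable centre, and pass to the limiting mean by
    completing the square. *)

Lemma pow_le_one x n : 0 <= x <= 1 -> x ^ n <= 1.
Proof. intros Hx. rewrite <- (pow1 n). apply pow_incr; lra. Qed.

Definition occ (k : nat) : nat := match k with O => O | S _ => 1%nat end.

Fixpoint occcount (eta : Z -> nat) (a : Z) (n : nat) : nat :=
  match n with O => O | S m => (occ (eta a) + occcount eta (a + 1)%Z m)%nat end.

(** [ncomp n s] counts the compositions of [s] into [n] ordered parts;
    [nocc n s] counts their nonzero parts, summed over all compositions. *)
Fixpoint ncomp (n s : nat) : R :=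
  match n with
  | O => if Nat.eqb s 0 then 1 else 0
  | S m => sum_f_R0 (fun k => ncomp m (s - k)) s
  end.

Fixpoint nocc (n s : nat) : R :=
  match n with
  | O => 0
  | S m => sum_f_R0 (fun k => INR (occ k) * ncomp m (s - k) + nocc m (s - k)) s
  end.

Lemma hockey_stick n s : sum_f_R0 (fun k => C (s - k + n) n) s = C (s + S n) (S n).
Proof.
  assert (Cnn : forall p, C p p = 1).
  { intros p. unfold C. rewrite Nat.sub_diag. simpl. field. apply INR_fact_neq_0. }
  induction s as [|s IH].
  - simpl. rewrite Cnn. replace (S n) with (S n + 0)%nat at 1 by lia.
    rewrite Nat.add_0_r, Cnn. ring.
  - rewrite decomp_sum by lia. simpl pred.
    rewrite (sum_eq _ (fun k => C (s - k + n) n)) by (intros; f_equal; lia).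
    rewrite IH. replace (S s - 0 + n)%nat with (s + S n)%nat by lia.
    replace (S s + S n)%nat with (S (s + S n)) by lia.
    apply pascal. lia.
Qed.

Lemma ncomp_binom n s : ncomp (S n) s = C (s + n) n.
Proof.
  revert s. induction n as [|n IH]; intros s.
  - transitivity 1.
    + destruct s as [|s]; [reflexivity|]. cbn [ncomp]. rewrite tech5, Nat.sub_diag.
      rewrite (sum_eq _ (fun _ => 0)), sum_cte; [simpl; ring|].
      intros i Hi. destruct (Nat.eqb_spec (S s - i) 0); [lia|reflexivity].
    + unfold C. rewrite Nat.add_0_r, Nat.sub_0_r. simpl. field. apply INR_fact_neq_0.
  - change (ncomp (S (S n)) s) with (sum_f_R0 (fun k => ncomp (S n) (s - k)) s).
    rewrite (sum_eq _ (fun k => C (s - k + n) n)) by (intros; apply IH).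
    apply hockey_stick.
Qed.

Lemma ncomp_pos n s : (1 <= n)%nat -> 0 < ncomp n s.
Proof.
  intros Hn. destruct n as [|n]; [lia|]. rewrite ncomp_binom. unfold C.
  apply Rmult_lt_0_compat; [apply INR_fact_lt_0|].
  apply Rinv_0_lt_compat, Rmult_lt_0_compat; apply INR_fact_lt_0.
Qed.

Lemma ncomp_ratio n s : (1 <= n)%nat ->
  INR (S s) * ncomp n (S s) = (INR (S s) + INR n - 1) * ncomp n s.
Proof.
  intros Hn. destruct n as [|n]; [lia|]. rewrite !ncomp_binom. unfold C.
  replace (S s + n - n)%nat with (S s) by lia. replace (s + n - n)%nat with s by lia.
  replace (S s + n)%nat with (S (s + n)) by lia.
  change (fact (S (s + n))) with (S (s + n) * fact (s + n))%nat.
  change (fact (S s)) with (S s * fact s)%nat. rewrite !mult_INR.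
  replace (INR (S s) + INR (S n) - 1) with (INR (S (s + n))) by (rewrite !S_INR, plus_INR; ring).
  assert (INR (fact n) <> 0) by apply INR_fact_neq_0.
  assert (INR (fact s) <> 0) by apply INR_fact_neq_0.
  assert (INR (S s) <> 0) by (apply not_0_INR; lia).
  field. tauto.
Qed.

Lemma nocc_0 n : nocc n 0 = 0.
Proof. induction n as [|n IH]; [reflexivity|]. simpl. rewrite IH. simpl. ring. Qed.

(** Given a positive particle number, a composition has [n] choices for a
    distinguished occupied part: [nocc n (s+1) = n * ncomp n s]. *)
Lemma nocc_S n s : nocc n (S s) = INR n * ncomp n s.
Proof.
  revert s. induction n as [|n IH]; intros s; [simpl; ring|].
  change (nocc (S n) (S s)) with
    (sum_f_R0 (fun k => INR (occ k) * ncomp n (S s - k) + nocc n (S s - k)) (S s)).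
  rewrite sum_plus, decomp_sum by lia. simpl pred. rewrite tech5, Nat.sub_diag, nocc_0.
  rewrite (sum_eq (fun i => INR (occ (S i)) * ncomp n (S s - S i)) (fun k => ncomp n (s - k)))
    by (intros; simpl; ring).
  rewrite (sum_eq (fun k => nocc n (S s - k)) (fun k => ncomp n (s - k) * INR n)).
  2:{ intros i Hi. replace (S s - i)%nat with (S (s - i)) by lia. rewrite IH; ring. }
  rewrite <- scal_sum. change (sum_f_R0 (fun k => ncomp n (s - k)) s) with (ncomp (S n) s).
  rewrite S_INR. simpl. ring.
Qed.

(** Mean number of occupied sites of a uniformly chosen composition of [s] into [n] parts. *)
Definition occ_mean (n s : nat) : R := INR n * INR s / (INR s + INR n - 1).

Lemma nocc_occ_mean n s : (1 <= n)%nat -> nocc n s = occ_mean n s * ncomp n s.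
Proof.
  intros Hn. unfold occ_mean. destruct s as [|s].
  - rewrite nocc_0. simpl. unfold Rdiv. ring.
  - rewrite nocc_S.
    assert (Hden : 0 < INR (S s) + INR n - 1).
    { rewrite S_INR. assert (1 <= INR n) by (apply (le_INR 1); lia). pose proof (pos_INR s). lra. }
    transitivity (INR n * ((INR (S s) + INR n - 1) * ncomp n s) / (INR (S s) + INR n - 1));
      [field; lra|].
    rewrite <- ncomp_ratio by exact Hn. field. lra.
Qed.

Lemma occ_mean_bounds n s : (1 <= n)%nat -> 0 <= occ_mean n s <= INR n.
Proof.
  intros Hn. unfold occ_mean. assert (1 <= INR n) by (apply (le_INR 1); auto).
  destruct s as [|s].
  - simpl. unfold Rdiv. rewrite Rmult_0_r, Rmult_0_l. lra.
  - assert (1 <= INR (S s)) by (apply (le_INR 1); lia).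
    split.
    + unfold Rdiv; apply Rmult_le_pos; [nra| left; apply Rinv_0_lt_compat; lra].
    + apply Rmult_le_reg_r with (INR (S s) + INR n - 1); [lra|].
      unfold Rdiv. rewrite Rmult_assoc, Rinv_l by lra. nra.
Qed.

(** Tangent-line approximation of [s |-> N s / (s + N - 1)] at [s = N m], valid
    for [N >= 2]: the error is at most [(4/N) (s - N m)^2]. *)
Lemma occ_mean_tangent (N T m : R) : 2 <= N -> 0 <= T -> 0 <= m ->
  let x0 := N * m + N - 1 in
  let gam := N * (N - 1) / x0 ^ 2 in
  (N * T / (T + N - 1) - gam * T - (N - N * (N - 1) / x0 - gam * (N * m))) ^ 2
  <= 16 / N ^ 2 * (T - N * m) ^ 4.
Proof.
  intros HN HT Hm x0 gam. set (X := T + N - 1).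
  assert (HX : N - 1 <= X) by (unfold X; lra). assert (Hx0 : N - 1 <= x0) by (unfold x0; nra).
  assert (E : N * T / X - gam * T - (N - N * (N - 1) / x0 - gam * (N * m)) =
              - (N * (N - 1) / (X * x0 ^ 2)) * (T - N * m) ^ 2).
  { unfold gam, X, x0. field. split; nra. }
  rewrite E. set (c := N * (N - 1) / (X * x0 ^ 2)).
  assert (Hpos : 0 < X * x0 ^ 2) by (apply Rmult_lt_0_compat; [lra| apply pow_lt; lra]).
  assert (Hc0 : 0 <= c) by (unfold c; apply Rmult_le_pos; [nra| apply Rlt_le, Rinv_0_lt_compat; lra]).
  assert (Hc1 : c <= 4 / N).
  { unfold c. apply Rmult_le_reg_r with (X * x0 ^ 2); [lra|].
    unfold Rdiv. rewrite Rmult_assoc, Rinv_l, Rmult_1_r by lra.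
    assert (N * (N - 1) <= N * X) by nra.
    assert (N * X <= 4 * / N * (X * x0 ^ 2)).
    { apply Rmult_le_reg_l with N; [lra|]. rewrite <- !Rmult_assoc.
      replace (N * 4 * / N) with 4 by (field; lra).
      assert (N * N <= 4 * x0 ^ 2) by nra. nra. }
    lra. }
  replace ((- c * (T - N * m) ^ 2) ^ 2) with (c ^ 2 * ((T - N * m) ^ 2) ^ 2) by ring.
  replace ((T - N * m) ^ 4) with (((T - N * m) ^ 2) ^ 2) by ring.
  apply Rmult_le_compat_r; [apply pow2_ge_0|].
  replace (16 / N ^ 2) with ((4 / N) ^ 2) by (field; lra). apply pow_incr. lra.
Qed.

Lemma tangent_slope_close (n : nat) (m mb : R) : (1 <= n)%nat -> 0 <= m <= mb ->
  Rabs (INR n * (INR n - 1) / (INR n * m + INR n - 1) ^ 2 - 1 / (1 + m) ^ 2)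
  <= 4 * (mb + 2) ^ 2 / INR n.
Proof.
  intros Hn Hm. destruct (Nat.eqb_spec n 1) as [->|Hn1].
  - simpl INR. replace (1 * (1 - 1) / (1 * m + 1 - 1) ^ 2) with 0 by (unfold Rdiv; ring).
    assert (H1 : 1 <= (1 + m) ^ 2) by nra.
    assert (0 < 1 / (1 + m) ^ 2 <= 1).
    { split; [apply Rdiv_lt_0_compat; lra|].
      apply Rmult_le_reg_r with ((1 + m) ^ 2); [lra|].
      unfold Rdiv. rewrite Rmult_assoc, Rinv_l by lra. lra. }
    rewrite Rabs_left1 by lra. nra.
  - assert (HN : 2 <= INR n) by (apply (le_INR 2); lia).
    set (N := INR n) in *. set (x := 1 + m).
    assert (Hx : 1 <= x <= 1 + mb) by (unfold x; lra).
    assert (Hnx : N * x - 1 > 0) by nra.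
    assert (Hb : 0 < x ^ 2 * (N * x - 1) ^ 2) by (apply Rmult_lt_0_compat; apply pow_lt; nra).
    replace (N * (N - 1) / (N * m + N - 1) ^ 2 - 1 / x ^ 2)
      with ((N * x * (2 - x) - 1) / (x ^ 2 * (N * x - 1) ^ 2)) by (unfold x; field; split; nra).
    unfold Rdiv. rewrite Rabs_mult, (Rabs_right (/ _)) by (left; apply Rinv_0_lt_compat; auto).
    assert (Ha : Rabs (N * x * (2 - x) - 1) <= N * (x + 1) ^ 2) by (apply Rabs_le; split; nra).
    apply Rmult_le_reg_r with (N * (x ^ 2 * (N * x - 1) ^ 2)); [apply Rmult_lt_0_compat; lra|].
    replace (Rabs (N * x * (2 - x) - 1) * / (x ^ 2 * (N * x - 1) ^ 2) * (N * (x ^ 2 * (N * x - 1) ^ 2)))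
      with (Rabs (N * x * (2 - x) - 1) * N) by (field; lra).
    replace (4 * (mb + 2) ^ 2 * / N * (N * (x ^ 2 * (N * x - 1) ^ 2)))
      with (4 * (mb + 2) ^ 2 * (x ^ 2 * (N * x - 1) ^ 2)) by (field; lra).
    assert (H1 : N ^ 2 <= 4 * (N * x - 1) ^ 2).
    { assert (N / 2 <= N * x - 1) by nra.
      replace (N ^ 2) with (4 * (N / 2) ^ 2) by (field; lra).
      apply Rmult_le_compat_l; [lra|]. apply pow_incr; lra. }
    assert (H2 : (x + 1) ^ 2 <= (mb + 2) ^ 2) by (apply pow_incr; lra).
    assert (Rabs (N * x * (2 - x) - 1) * N <= N ^ 2 * (x + 1) ^ 2) by nra.
    assert (1 <= x ^ 2) by nra.
    assert (N ^ 2 * (x + 1) ^ 2 <= (x + 1) ^ 2 * (x ^ 2 * (4 * (N * x - 1) ^ 2))).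
    { rewrite Rmult_comm. apply Rmult_le_compat_l; [apply pow2_ge_0|].
      pose proof (pow2_ge_0 (N * x - 1)). nra. }
    nra.
Qed.

Lemma cv_const (c : R) : Un_cv (fun _ => c) c.
Proof. intros e He. exists 0%nat. intros. unfold Rdist. rewrite Rminus_diag, Rabs_R0. lra. Qed.

Lemma cv_pow (u : nat -> R) l k : Un_cv u l -> Un_cv (fun N => u N ^ k) (l ^ k).
Proof. intros H. induction k as [|k IH]; [exact (cv_const 1)| apply CV_mult; auto]. Qed.

Lemma le_of_vanishing (t D : R) (u : nat -> R) N :
  Un_cv u 0 -> (forall M, (N <= M)%nat -> t <= D + u M) -> t <= D.
Proof.
  intros Hu Ht. replace D with (D + 0) by ring.
  apply (@Rle_cv_lim (fun _ => t) (fun k => D + u (k + N)%nat)).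
  - intros k. apply Ht. lia.
  - apply cv_const.
  - apply CV_plus; [apply cv_const| apply CV_shift'; exact Hu].
Qed.

(** Completing the square: recentring a second moment around [m] instead of [c]
    costs at most [(X - m P)^2 / P], where [X] is the first moment and [P] the mass. *)
Lemma recentre_second_moment (X2 X P c m : R) : 0 < P ->
  X2 - 2 * m * X + m ^ 2 * P <= (X2 - 2 * c * X + c ^ 2 * P) + (X - m * P) ^ 2 / P.
Proof.
  intros HP.
  assert (E : X2 - 2 * m * X + m ^ 2 * P =
              (X2 - 2 * c * X + c ^ 2 * P) + (X - m * P) ^ 2 / P - (X - c * P) ^ 2 / P)
    by (field; lra).
  assert (0 <= (X - c * P) ^ 2 / P)
    by (apply Rmult_le_pos; [apply pow2_ge_0| apply Rlt_le, Rinv_0_lt_compat; lra]).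
  lra.
Qed.

Section TruncatedProductMeasure.

Variable rho : R.
Hypothesis Hrho : 0 < rho.

Definition cc : R := 1 / (1 + rho).
Definition qq : R := rho / (1 + rho).

Lemma cc_pos : 0 < cc.
Proof. unfold cc; apply Rdiv_lt_0_compat; lra. Qed.

Lemma qq_bounds : 0 < qq < 1 /\ 1 - qq = cc.
Proof.
  unfold qq, cc; split; [split|].
  - apply Rdiv_lt_0_compat; lra.
  - apply Rmult_lt_reg_r with (1 + rho); [lra|].
    unfold Rdiv; rewrite Rmult_assoc, Rinv_l by lra; lra.
  - field; lra.
Qed.

Lemma geom_0 : geom rho 0 = cc.
Proof. unfold geom, cc; simpl; ring. Qed.

Lemma geom_S k : geom rho (S k) = qq * geom rho k.
Proof. unfold geom, qq; simpl; ring. Qed.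

Lemma geom_nonneg k : 0 <= geom rho k.
Proof.
  unfold geom; apply Rmult_le_pos.
  - apply Rlt_le, cc_pos.
  - apply pow_le; apply Rlt_le, (proj1 qq_bounds).
Qed.

Definition mass (M : nat) : R := sum_f_R0 (geom rho) M.

Lemma mass_closed M : mass M = 1 - qq ^ S M.
Proof.
  destruct qq_bounds as [[Hq0 Hq1] Hc]. unfold mass.
  rewrite (sum_eq _ (fun k => qq ^ k * cc)) by (intros; unfold geom, qq, cc; ring).
  rewrite <- scal_sum, tech3 by lra. rewrite <- Hc. field. lra.
Qed.

Lemma mass_bounds M : cc <= mass M <= 1.
Proof.
  destruct qq_bounds as [[Hq0 Hq1] Hc]. rewrite mass_closed.
  assert (0 < qq ^ S M) by (apply pow_lt; lra).
  assert (qq ^ M <= 1) by (apply pow_le_one; lra).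
  assert (qq ^ S M <= qq) by (simpl; nra).
  lra.
Qed.

Lemma mass_cv : Un_cv mass 1.
Proof.
  intros eps Heps. destruct qq_bounds as [[Hq0 Hq1] _].
  destruct (pow_lt_1_zero qq ltac:(rewrite Rabs_right; lra) eps Heps) as [N0 HN0].
  exists N0. intros n Hn. unfold Rdist. rewrite mass_closed.
  replace (1 - qq ^ S n - 1) with (- qq ^ S n) by ring. rewrite Rabs_Ropp. apply HN0. lia.
Qed.

Lemma wsum_ext_local N n : forall a F F' eta,
  (forall xi, (forall x, (x < a \/ a + Z.of_nat n <= x)%Z -> xi x = eta x) -> F xi = F' xi) ->
  wsum rho N a n F eta = wsum rho N a n F' eta.
Proof.
  induction n as [|m IH]; intros a F F' eta H; simpl.
  - apply H; auto.
  - apply sum_eq; intros k _. f_equal. apply IH.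
    intros xi Hxi. apply H. intros x Hx.
    rewrite Hxi by lia. unfold upd. destruct (Z.eq_dec x a); [lia|reflexivity].
Qed.

Lemma wsum_ext N n a F F' eta : (forall xi, F xi = F' xi) ->
  wsum rho N a n F eta = wsum rho N a n F' eta.
Proof. intros H; apply wsum_ext_local; auto. Qed.

Lemma wsum_plus N n : forall a F G eta,
  wsum rho N a n (fun xi => F xi + G xi) eta = wsum rho N a n F eta + wsum rho N a n G eta.
Proof.
  induction n as [|m IH]; intros a F G eta; simpl; auto.
  rewrite <- sum_plus. apply sum_eq; intros k _. rewrite IH. ring.
Qed.

Lemma wsum_scal N n : forall a c F eta,
  wsum rho N a n (fun xi => c * F xi) eta = c * wsum rho N a n F eta.
Proof.
  induction n as [|m IH]; intros a c F eta; simpl; auto.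
  rewrite scal_sum. apply sum_eq; intros k _. rewrite IH. ring.
Qed.

Lemma wsum_const N n : forall a c eta, wsum rho N a n (fun _ => c) eta = c * mass N ^ n.
Proof.
  induction n as [|m IH]; intros a c eta; simpl; [ring|].
  rewrite (sum_eq _ (fun k => geom rho k * (c * mass N ^ m))) by (intros; rewrite IH; reflexivity).
  rewrite <- scal_sum. unfold mass. ring.
Qed.

Lemma wsum_le N n : forall a F F' eta,
  (forall xi, F xi <= F' xi) -> wsum rho N a n F eta <= wsum rho N a n F' eta.
Proof.
  induction n as [|m IH]; intros a F F' eta H; simpl; auto.
  apply sum_Rle; intros k _. apply Rmult_le_compat_l; [apply geom_nonneg|]. apply IH; auto.
Qed.

Lemma wsum_nonneg N n a F eta : (forall xi, 0 <= F xi) -> 0 <= wsum rho N a n F eta.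
Proof.
  intros H. apply Rle_trans with (wsum rho N a n (fun _ => 0) eta).
  - rewrite wsum_const; lra.
  - apply wsum_le; auto.
Qed.

Lemma wsum_add N n1 : forall n2 a F eta,
  wsum rho N a (n1 + n2) F eta =
  wsum rho N a n1 (fun xi => wsum rho N (a + Z.of_nat n1) n2 F xi) eta.
Proof.
  induction n1 as [|m IH]; intros n2 a F eta; simpl.
  - f_equal. lia.
  - apply sum_eq; intros k _. rewrite IH. f_equal. apply wsum_ext; intros xi. f_equal. lia.
Qed.

Lemma wsum_mono_trunc N n : forall a F eta, (forall xi, 0 <= F xi) ->
  wsum rho N a n F eta <= wsum rho (S N) a n F eta.
Proof.
  induction n as [|m IH]; intros a F eta HF; simpl wsum; [lra|].
  assert (0 <= geom rho (S N) * wsum rho (S N) (a + 1) m F (upd eta a (S N)))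
    by (apply Rmult_le_pos; [apply geom_nonneg| apply wsum_nonneg; auto]).
  enough (sum_f_R0 (fun k => geom rho k * wsum rho N (a + 1) m F (upd eta a k)) N <=
          sum_f_R0 (fun k => geom rho k * wsum rho (S N) (a + 1) m F (upd eta a k)) N) by lra.
  apply sum_Rle; intros k _. apply Rmult_le_compat_l; [apply geom_nonneg|]. apply IH; auto.
Qed.

Lemma wsum_mono_trunc_le N M n a F eta : (N <= M)%nat -> (forall xi, 0 <= F xi) ->
  wsum rho N a n F eta <= wsum rho M a n F eta.
Proof.
  intros HNM HF. induction HNM; [lra|].
  eapply Rle_trans; [apply IHHNM| apply wsum_mono_trunc; auto].
Qed.

(** The integrands met below depend on a block only through two statistics: the
    number of occupied sites and the particle number.  [statW M n H] is the
    truncated sum of [H (#occupied) (total)] over a block of [n] sites. *)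
Fixpoint statW (M n : nat) (H : nat -> nat -> R) : R :=
  match n with
  | O => H O O
  | S m => sum_f_R0 (fun k => geom rho k * statW M m (fun G t => H (occ k + G)%nat (k + t)%nat)) M
  end.

Lemma wsum_statW M n : forall a H eta,
  wsum rho M a n (fun xi => H (occcount xi a n) (blocksum xi a n)) eta = statW M n H.
Proof.
  induction n as [|m IH]; intros a H eta; simpl; auto.
  apply sum_eq; intros k _. f_equal.
  rewrite <- (IH (a + 1)%Z (fun G t => H (occ k + G)%nat (k + t)%nat) (upd eta a k)).
  apply wsum_ext_local. intros xi Hxi.
  rewrite (Hxi a) by lia. unfold upd. destruct (Z.eq_dec a a); [reflexivity|congruence].
Qed.

Lemma statW_ext M n : forall H H', (forall G t, H G t = H' G t) -> statW M n H = statW M n H'.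
Proof.
  induction n as [|m IH]; intros H H' E; simpl; auto.
  apply sum_eq; intros k _. f_equal. apply IH. intros; apply E.
Qed.

Lemma statW_plus M n : forall H H',
  statW M n (fun G t => H G t + H' G t) = statW M n H + statW M n H'.
Proof.
  induction n as [|m IH]; intros H H'; simpl; auto.
  rewrite <- sum_plus. apply sum_eq; intros k _. rewrite IH. ring.
Qed.

Lemma statW_scal M n : forall c H, statW M n (fun G t => c * H G t) = c * statW M n H.
Proof.
  induction n as [|m IH]; intros c H; simpl; auto.
  rewrite scal_sum. apply sum_eq; intros k _. rewrite IH. ring.
Qed.

Lemma statW_const M n c : statW M n (fun _ _ => c) = c * mass M ^ n.
Proof.
  rewrite <- (wsum_statW M n 0%Z (fun _ _ => c) zero_conf). apply wsum_const.
Qed.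

Lemma statW_le M n : forall H H', (forall G t, H G t <= H' G t) -> statW M n H <= statW M n H'.
Proof.
  induction n as [|m IH]; intros H H' E; simpl; auto.
  apply sum_Rle; intros k _. apply Rmult_le_compat_l; [apply geom_nonneg|]. apply IH. intros; apply E.
Qed.

Lemma statW_level_step M m s (f : nat -> R) : (s <= M)%nat ->
  statW M (S m) (fun G t => if Nat.eqb t s then f G else 0) =
  sum_f_R0 (fun k => geom rho k *
     statW M m (fun G t => if Nat.eqb t (s - k) then f (occ k + G)%nat else 0)) s.
Proof.
  intros Hs. simpl statW.
  assert (Htrunc : forall N, (s <= N <= M)%nat ->
     sum_f_R0 (fun k => geom rho k *
        statW M m (fun G t => if Nat.eqb (k + t) s then f (occ k + G)%nat else 0)) N =
     sum_f_R0 (fun k => geom rho k *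
        statW M m (fun G t => if Nat.eqb t (s - k) then f (occ k + G)%nat else 0)) s).
  { intros N [HsN _]. induction HsN as [|N HN IHN].
    - apply sum_eq; intros k Hk. f_equal. apply statW_ext; intros G t.
      destruct (Nat.eqb_spec (k + t) s), (Nat.eqb_spec t (s - k)); auto; lia.
    - rewrite tech5, IHN.
      rewrite (statW_ext _ _ _ (fun _ _ => 0)), statW_const; [ring|].
      intros G t. destruct (Nat.eqb_spec (S N + t) s); [lia|reflexivity]. }
  apply Htrunc. lia.
Qed.

(** Every configuration of a block carrying [s] particles has weight [cc^n qq^s]. *)
Lemma geom_level m k s : (k <= s)%nat ->
  geom rho k * (cc ^ m * qq ^ (s - k)) = cc ^ S m * qq ^ s.
Proof.
  intros Hk. unfold geom. fold cc qq.
  replace s with (k + (s - k))%nat at 2 by lia. rewrite pow_add. simpl. ring.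
Qed.

Lemma statW_level M n : forall s, (s <= M)%nat ->
  statW M n (fun _ t => if Nat.eqb t s then 1 else 0) = cc ^ n * qq ^ s * ncomp n s.
Proof.
  induction n as [|m IH]; intros s Hs.
  - destruct s; simpl; ring.
  - rewrite (statW_level_step M m s (fun _ => 1)) by exact Hs. simpl ncomp.
    rewrite scal_sum. apply sum_eq; intros k Hk.
    rewrite IH by lia. rewrite <- (geom_level m k s Hk). ring.
Qed.

Lemma statW_level_occ M n : forall s, (s <= M)%nat ->
  statW M n (fun G t => if Nat.eqb t s then INR G else 0) = cc ^ n * qq ^ s * nocc n s.
Proof.
  induction n as [|m IH]; intros s Hs.
  - destruct s; simpl; ring.
  - rewrite (statW_level_step M m s INR) by exact Hs. simpl nocc.
    rewrite scal_sum. apply sum_eq; intros k Hk.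
    rewrite (statW_ext _ _ _ (fun G t => INR (occ k) * (if Nat.eqb t (s - k) then 1 else 0)
                                     + (if Nat.eqb t (s - k) then INR G else 0))).
    2:{ intros G t. destruct (Nat.eqb t (s - k)); [rewrite plus_INR|]; ring. }
    rewrite statW_plus, statW_scal, IH, statW_level by lia.
    rewrite <- (geom_level m k s Hk). ring.
Qed.

(** Since [g = occ], the sum of
    [V_g] over a block is affine in (#occupied, total); on the level set
    [{total = s}] all configurations have the same weight, so conditioning
    averages #occupied uniformly over the compositions of [s], giving [occ_mean]. *)
Lemma sumVg_stats n : forall xi a, sumVg rho xi a n =
  INR (occcount xi a n) - INR n * phi rho - phi' rho * (INR (blocksum xi a n) - INR n * rho).
Proof.
  induction n as [|m IH]; intros xi a; simpl sumVg; simpl occcount; simpl blocksum.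
  - simpl. ring.
  - rewrite IH, !plus_INR, S_INR. unfold Vg.
    replace (g (xi a)) with (INR (occ (xi a))) by (destruct (xi a); reflexivity). ring.
Qed.

Lemma condE_sumVg b n eta : (1 <= n)%nat ->
  condE rho b n (fun xi => sumVg rho xi b n) eta =
  occ_mean n (blocksum eta b n) - INR n * phi rho
  - phi' rho * (INR (blocksum eta b n) - INR n * rho).
Proof.
  intros Hn. unfold condE, box_exp. set (s := blocksum eta b n).
  set (Y := - (INR n * phi rho + phi' rho * (INR s - INR n * rho))).
  set (lev := fun (_ : nat) t => if Nat.eqb t s then 1 else 0).
  rewrite (wsum_ext _ _ _ _
     (fun xi => (if Nat.eqb (blocksum xi b n) s then INR (occcount xi b n) else 0)
                + Y * lev (occcount xi b n) (blocksum xi b n))).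
  2:{ intros xi. unfold lev. rewrite sumVg_stats.
      destruct (Nat.eqb_spec (blocksum xi b n) s) as [E|E]; [rewrite E; unfold Y|]; ring. }
  rewrite (wsum_ext _ _ _ (fun xi => if Nat.eqb (blocksum xi b n) s then 1 else 0)
     (fun xi => lev (occcount xi b n) (blocksum xi b n))) by reflexivity.
  rewrite (wsum_statW s n b (fun G t => (if Nat.eqb t s then INR G else 0) + Y * lev G t)).
  rewrite wsum_statW, statW_plus, statW_scal. unfold lev.
  rewrite statW_level_occ, statW_level, nocc_occ_mean by (auto; lia).
  destruct qq_bounds as [[Hq0 _] _]. pose proof cc_pos. pose proof (ncomp_pos n s Hn).
  assert (0 < cc ^ n) by (apply pow_lt; auto). assert (0 < qq ^ s) by (apply pow_lt; auto).
  unfold Y. field. repeat split; lra.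
Qed.

(** Particle number of the [j]-th block [I_(j+1) = [a + jK, a + (j+1)K)]. *)
Definition blockS (eta : Z -> nat) (a : Z) (K j : nat) : nat :=
  blocksum eta (a + Z.of_nat (j * K)) K.

Lemma rsum_ext (f f' : nat -> R) L : (forall j, (j < L)%nat -> f j = f' j) -> rsum f L = rsum f' L.
Proof. induction L; intros H; simpl; auto. rewrite IHL, H; auto. Qed.

Lemma rsum_affine (f h : nat -> R) c d L :
  rsum (fun j => f j - c - d * h j) L = rsum f L - INR L * c - d * rsum h L.
Proof. induction L as [|L IH]; simpl rsum; [simpl; ring|]. rewrite IH, S_INR. ring. Qed.

Lemma blocksum_split n1 : forall n2 eta a,
  blocksum eta a (n1 + n2) = (blocksum eta a n1 + blocksum eta (a + Z.of_nat n1) n2)%nat.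
Proof.
  induction n1 as [|m IH]; intros n2 eta a; simpl.
  - f_equal; lia.
  - rewrite IH. replace (a + 1 + Z.of_nat m)%Z with (a + Z.pos (Pos.of_succ_nat m))%Z by lia. lia.
Qed.

Lemma blocksum_blocks eta a K L :
  INR (blocksum eta a (L * K)) = rsum (fun j => INR (blockS eta a K j)) L.
Proof.
  induction L as [|L IH]; simpl rsum; [reflexivity|].
  replace (S L * K)%nat with (L * K + K)%nat by lia.
  rewrite blocksum_split, plus_INR, IH. reflexivity.
Qed.

Lemma V2_occ_mean a K L eta : (1 <= K)%nat -> (1 <= L)%nat ->
  V2 rho a K L eta =
  rsum (fun j => occ_mean K (blockS eta a K j)) L - occ_mean (L * K) (blocksum eta a (L * K)).
Proof.
  intros HK HL. unfold V2.
  rewrite (rsum_ext _ (fun j => occ_mean K (blockS eta a K j) - INR K * phi rho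
                                - phi' rho * (INR (blockS eta a K j) - INR K * rho))).
  2:{ intros j _. apply condE_sumVg; auto. }
  rewrite condE_sumVg by nia.
  rewrite (rsum_ext _ (fun j => occ_mean K (blockS eta a K j) - (INR K * phi rho - phi' rho * INR K * rho)
                                - phi' rho * INR (blockS eta a K j))) by (intros; ring).
  rewrite rsum_affine, blocksum_blocks, mult_INR. ring.
Qed.

Lemma V2_bound a K L eta : (1 <= K)%nat -> (1 <= L)%nat -> Rabs (V2 rho a K L eta) <= INR (L * K).
Proof.
  intros HK HL. rewrite V2_occ_mean by auto.
  assert (Hsum : forall L', 0 <= rsum (fun j => occ_mean K (blockS eta a K j)) L' <= INR L' * INR K).
  { induction L' as [|L' IH]; simpl rsum; [simpl; lra|].
    pose proof (occ_mean_bounds K (blockS eta a K L') HK). rewrite S_INR. lra. }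
  pose proof (Hsum L). pose proof (occ_mean_bounds (L * K) (blocksum eta a (L * K)) ltac:(nia)).
  rewrite mult_INR in *. apply Rabs_le. lra.
Qed.

Definition sumW (M n : nat) (h : nat -> R) : R := statW M n (fun _ t => h t).

Lemma wsum_sumW M n a h eta : wsum rho M a n (fun xi => h (blocksum xi a n)) eta = sumW M n h.
Proof. apply (wsum_statW M n a (fun _ t => h t)). Qed.

Lemma sumW_S M n h :
  sumW M (S n) h = sum_f_R0 (fun k => geom rho k * sumW M n (fun t => h (k + t)%nat)) M.
Proof. reflexivity. Qed.

Lemma sumW_ext M n f f' : (forall t, f t = f' t) -> sumW M n f = sumW M n f'.
Proof. intros; apply statW_ext; auto. Qed.

Lemma sumW_plus M n f f' : sumW M n (fun t => f t + f' t) = sumW M n f + sumW M n f'.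
Proof. apply (statW_plus M n (fun _ t => f t) (fun _ t => f' t)). Qed.

Lemma sumW_scal M n c f : sumW M n (fun t => c * f t) = c * sumW M n f.
Proof. apply (statW_scal M n c (fun _ t => f t)). Qed.

Lemma sumW_const M n c : sumW M n (fun _ => c) = c * mass M ^ n.
Proof. unfold sumW. apply statW_const. Qed.

Lemma sumW_le M n f f' : (forall t, f t <= f' t) -> sumW M n f <= sumW M n f'.
Proof. intros; apply statW_le; auto. Qed.

Lemma sumW_nonneg M n f : (forall t, 0 <= f t) -> 0 <= sumW M n f.
Proof.
  intros. apply Rle_trans with (sumW M n (fun _ => 0)); [rewrite sumW_const; lra|].
  apply sumW_le; auto.
Qed.

Lemma geom_sum_poly4 M (d : nat -> R) x0 x1 x2 x3 x4 :
  sum_f_R0 (fun k => geom rho k * (x0 + x1 * d k + x2 * d k ^ 2 + x3 * d k ^ 3 + x4 * d k ^ 4)) M =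
  x0 * mass M + x1 * sum_f_R0 (fun k => geom rho k * d k) M
  + x2 * sum_f_R0 (fun k => geom rho k * d k ^ 2) M + x3 * sum_f_R0 (fun k => geom rho k * d k ^ 3) M
  + x4 * sum_f_R0 (fun k => geom rho k * d k ^ 4) M.
Proof. unfold mass. induction M; [simpl; ring|]. rewrite !tech5, IHM. ring. Qed.

Definition mom (M j : nat) : R := sum_f_R0 (fun k => geom rho k * INR k ^ j) M.

Lemma mom_nonneg M j : 0 <= mom M j.
Proof.
  unfold mom. apply cond_pos_sum. intros. apply Rmult_le_pos; [apply geom_nonneg|].
  apply pow_le, pos_INR.
Qed.

(** Stein-type inequality for the geometric law: [geom (k+1) = qq geom k] gives
    [E f(X) <= f 0 + rho E (f(X+1) - f(X))] for nonnegative [f], up to truncation. *)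
Lemma geom_stein M (f : nat -> R) : (forall k, 0 <= f k) ->
  sum_f_R0 (fun k => geom rho k * f k) M <=
  f 0%nat + rho * sum_f_R0 (fun k => geom rho k * (f (S k) - f k)) M.
Proof.
  intros Hf. destruct qq_bounds as [[Hq0 Hq1] Hc]. pose proof cc_pos as Hcc.
  assert (Hshift : sum_f_R0 (fun k => geom rho k * f k) (S M) =
     cc * f 0%nat + qq * sum_f_R0 (fun k => geom rho k * f (S k)) M).
  { rewrite decomp_sum by lia. simpl pred. rewrite geom_0, scal_sum. f_equal.
    apply sum_eq. intros i _. rewrite geom_S. ring. }
  assert (Hmono : sum_f_R0 (fun k => geom rho k * f k) M <= sum_f_R0 (fun k => geom rho k * f k) (S M)).
  { rewrite tech5. pose proof (Rmult_le_pos _ _ (geom_nonneg (S M)) (Hf (S M))). lra. }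
  rewrite (sum_eq (fun k => geom rho k * (f (S k) - f k))
                  (fun k => geom rho k * f (S k) - geom rho k * f k)) by (intros; ring).
  rewrite minus_sum.
  assert (Hq : qq = rho * cc) by (unfold qq, cc; field; lra).
  apply Rmult_le_reg_l with cc; [exact Hcc|].
  set (S0 := sum_f_R0 (fun k => geom rho k * f k) M) in *.
  set (S1 := sum_f_R0 (fun k => geom rho k * f (S k)) M) in *.
  replace (cc * (f 0%nat + rho * (S1 - S0))) with
    (sum_f_R0 (fun k => geom rho k * f k) (S M) - qq * S0) by (rewrite Hshift, Hq; ring).
  rewrite <- Hc. lra.
Qed.

(** Explicit bounds on the moments of order 2, 3, 4 of the geometric law, as
    produced by iterating [geom_stein]. *)
Definition B2 : R := rho * (2 * rho + 1).
Definition B3 : R := rho * (3 * B2 + 3 * rho + 1).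
Definition B4 : R := rho * (4 * B3 + 6 * B2 + 4 * rho + 1).

Lemma mom_bounds M : mom M 1 <= rho /\ mom M 2 <= B2 /\ mom M 4 <= B4.
Proof.
  assert (Hst : forall j, (1 <= j)%nat ->
    mom M j <= rho * sum_f_R0 (fun k => geom rho k * ((INR k + 1) ^ j - INR k ^ j)) M).
  { intros j Hj. unfold mom. eapply Rle_trans; [apply geom_stein; intros; apply pow_le, pos_INR|].
    destruct j as [|j]; [lia|]. simpl INR at 1. rewrite pow_i by lia.
    right. rewrite Rplus_0_l. f_equal. apply sum_eq. intros. rewrite S_INR. reflexivity. }
  assert (Hm1 : sum_f_R0 (fun k => geom rho k * INR k) M = mom M 1)
    by (apply sum_eq; intros; simpl; ring).
  assert (Hpoly : forall j c0 c1 c2 c3, (1 <= j)%nat ->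
     (forall x, (x + 1) ^ j - x ^ j = c0 + c1 * x + c2 * x ^ 2 + c3 * x ^ 3 + 0 * x ^ 4) ->
     mom M j <= rho * (c0 * mass M + c1 * mom M 1 + c2 * mom M 2 + c3 * mom M 3)).
  { intros j c0 c1 c2 c3 Hj Hx. eapply Rle_trans; [apply Hst, Hj|]. right. f_equal.
    rewrite (sum_eq _ (fun k => geom rho k * (c0 + c1 * INR k + c2 * INR k ^ 2 + c3 * INR k ^ 3
                                              + 0 * INR k ^ 4))) by (intros; rewrite Hx; ring).
    rewrite geom_sum_poly4, Hm1. unfold mom. ring. }
  pose proof (mass_bounds M). pose proof (mom_nonneg M 1). pose proof (mom_nonneg M 2).
  pose proof (mom_nonneg M 3).
  assert (M1 : mom M 1 <= rho) by (pose proof (Hpoly 1%nat 1 0 0 0 ltac:(lia) ltac:(intros; ring)); nra).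
  assert (M2 : mom M 2 <= B2) by (pose proof (Hpoly 2%nat 1 2 0 0 ltac:(lia) ltac:(intros; ring));
                                  unfold B2; nra).
  assert (M3 : mom M 3 <= B3) by (pose proof (Hpoly 3%nat 1 3 3 0 ltac:(lia) ltac:(intros; ring));
                                  unfold B3; nra).
  repeat split; auto.
  pose proof (Hpoly 4%nat 1 4 6 4 ltac:(lia) ltac:(intros; ring)). unfold B4. nra.
Qed.

Definition tmean (M : nat) : R := mom M 1 / mass M.
Definition cmom (M j : nat) : R := sum_f_R0 (fun k => geom rho k * (INR k - tmean M) ^ j) M.

Definition mubar : R := rho * (1 + rho).

Lemma tmean_bounds M : 0 <= tmean M <= mubar.
Proof.
  unfold tmean, mubar. pose proof (mass_bounds M) as [Hm _]. pose proof cc_pos.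
  destruct (mom_bounds M) as [Hm1 _]. pose proof (mom_nonneg M 1).
  split; [unfold Rdiv; apply Rmult_le_pos; [lra| apply Rlt_le, Rinv_0_lt_compat; lra]|].
  apply Rmult_le_reg_r with (mass M); [lra|]. unfold Rdiv. rewrite Rmult_assoc, Rinv_l by lra.
  assert (rho * (1 + rho) * cc = rho) by (unfold cc; field; lra). nra.
Qed.

Lemma cmom1 M : cmom M 1 = 0.
Proof.
  unfold cmom.
  rewrite (sum_eq _ (fun k => geom rho k * INR k ^ 1 - geom rho k * tmean M)) by (intros; ring).
  rewrite minus_sum, <- scal_sum. fold (mom M 1) (mass M).
  pose proof (mass_bounds M). pose proof cc_pos. unfold tmean. field. lra.
Qed.

Definition E2c : R := 2 * (B2 + mubar ^ 2).
Definition E4c : R := 8 * (B4 + mubar ^ 4).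

Lemma E_nonneg : 0 <= B2 /\ 0 <= E2c /\ 0 <= E4c.
Proof.
  assert (0 <= B2) by (unfold B2; nra).
  assert (0 <= B3) by (unfold B3; nra).
  assert (0 <= B4) by (unfold B4; nra).
  unfold E2c, E4c. repeat split; auto.
  - pose proof (pow2_ge_0 mubar). lra.
  - assert (0 <= mubar ^ 4) by (apply pow_le; unfold mubar; nra). lra.
Qed.

Lemma pow4_le x m : (x - m) ^ 4 <= 8 * (x ^ 4 + m ^ 4).
Proof.
  assert (H1 : (x - m) ^ 2 <= 2 * (x ^ 2 + m ^ 2)) by (pose proof (pow2_ge_0 (x + m)); nra).
  replace ((x - m) ^ 4) with (((x - m) ^ 2) ^ 2) by ring.
  apply Rle_trans with ((2 * (x ^ 2 + m ^ 2)) ^ 2); [apply pow_incr; split; [apply pow2_ge_0|lra]|].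
  pose proof (pow2_ge_0 (x ^ 2 - m ^ 2)). nra.
Qed.

Lemma cmom2_bounds M : 0 <= cmom M 2 <= E2c.
Proof.
  pose proof (tmean_bounds M). pose proof (mass_bounds M). destruct (mom_bounds M) as [_ [Hm2 _]].
  split.
  - apply cond_pos_sum. intros. apply Rmult_le_pos; [apply geom_nonneg| apply pow2_ge_0].
  - unfold cmom. eapply Rle_trans.
    + apply (sum_Rle _ (fun k => geom rho k * (2 * tmean M ^ 2 + 0 * INR k + 2 * INR k ^ 2
                                                + 0 * INR k ^ 3 + 0 * INR k ^ 4))).
      intros k _. apply Rmult_le_compat_l; [apply geom_nonneg|].
      pose proof (pow2_ge_0 (INR k + tmean M)). nra.
    + rewrite geom_sum_poly4. fold (mom M 2). unfold E2c.
      assert (tmean M ^ 2 <= mubar ^ 2) by (apply pow_incr; lra).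
      assert (0 <= tmean M ^ 2) by (apply pow2_ge_0). nra.
Qed.

Lemma cmom4_bounds M : 0 <= cmom M 4 <= E4c.
Proof.
  pose proof (tmean_bounds M). pose proof (mass_bounds M).
  destruct (mom_bounds M) as [_ [_ Hm4]]. split.
  - apply cond_pos_sum. intros i. apply Rmult_le_pos; [apply geom_nonneg|].
    replace ((INR i - tmean M) ^ 4) with (((INR i - tmean M) ^ 2) ^ 2) by ring. apply pow2_ge_0.
  - unfold cmom. eapply Rle_trans.
    + apply (sum_Rle _ (fun k => geom rho k * (8 * tmean M ^ 4 + 0 * INR k + 0 * INR k ^ 2
                                                + 0 * INR k ^ 3 + 8 * INR k ^ 4))).
      intros k _. apply Rmult_le_compat_l; [apply geom_nonneg|].
      pose proof (pow4_le (INR k) (tmean M)). lra.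
    + rewrite geom_sum_poly4. fold (mom M 4). unfold E4c.
      assert (tmean M ^ 4 <= mubar ^ 4) by (apply pow_incr; lra).
      assert (0 <= tmean M ^ 4) by (apply pow_le; lra). nra.
Qed.

Definition bcmom (M n j : nat) : R := sumW M n (fun t => (INR t - INR n * tmean M) ^ j).

Lemma sumW_poly4 M n (u : nat -> R) x0 x1 x2 x3 x4 :
  sumW M n (fun t => x0 + x1 * u t + x2 * u t ^ 2 + x3 * u t ^ 3 + x4 * u t ^ 4) =
  x0 * mass M ^ n + x1 * sumW M n u + x2 * sumW M n (fun t => u t ^ 2)
  + x3 * sumW M n (fun t => u t ^ 3) + x4 * sumW M n (fun t => u t ^ 4).
Proof. rewrite !sumW_plus, !sumW_scal, sumW_const. ring. Qed.

(** Adding one site: expand [((k - mu) + (t - n mu)) ^ j] by the coefficients [x i]. *)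
Lemma bcmom_S M n j (x : nat -> R -> R) :
  (forall d u, (d + u) ^ j = x 0%nat d + x 1%nat d * u + x 2%nat d * u ^ 2 + x 3%nat d * u ^ 3
                             + x 4%nat d * u ^ 4) ->
  bcmom M (S n) j = sum_f_R0 (fun k => geom rho k *
     (x 0%nat (INR k - tmean M) * mass M ^ n + x 1%nat (INR k - tmean M) * bcmom M n 1
      + x 2%nat (INR k - tmean M) * bcmom M n 2 + x 3%nat (INR k - tmean M) * bcmom M n 3
      + x 4%nat (INR k - tmean M) * bcmom M n 4)) M.
Proof.
  intros Hx. unfold bcmom. rewrite sumW_S. apply sum_eq. intros k _. f_equal.
  set (d := INR k - tmean M). set (u := fun t => INR t - INR n * tmean M).
  rewrite (sumW_ext _ _ _ (fun t => x 0%nat d + x 1%nat d * u t + x 2%nat d * u t ^ 2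
                                     + x 3%nat d * u t ^ 3 + x 4%nat d * u t ^ 4)).
  2:{ intros t. rewrite <- Hx. f_equal. unfold d, u. rewrite plus_INR, S_INR. ring. }
  rewrite sumW_poly4. rewrite (sumW_ext _ _ u (fun t => u t ^ 1)) by (intros; ring). reflexivity.
Qed.

Lemma geom_sum_central M x0 x1 x2 x3 x4 :
  sum_f_R0 (fun k => geom rho k * (x0 + x1 * (INR k - tmean M) + x2 * (INR k - tmean M) ^ 2
                        + x3 * (INR k - tmean M) ^ 3 + x4 * (INR k - tmean M) ^ 4)) M =
  x0 * mass M + x2 * cmom M 2 + x3 * cmom M 3 + x4 * cmom M 4.
Proof.
  rewrite (geom_sum_poly4 M (fun k => INR k - tmean M)).
  pose proof (cmom1 M) as E. unfold cmom in *.
  rewrite (sum_eq (fun k => geom rho k * (INR k - tmean M)) (fun k => geom rho k * (INR k - tmean M) ^ 1))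
    by (intros; ring).
  rewrite E. ring.
Qed.

Lemma bcmom1 M n : bcmom M n 1 = 0.
Proof.
  induction n as [|n IH]; [unfold bcmom, sumW; simpl; ring|].
  rewrite (bcmom_S M n 1 (fun i d => match i with 0%nat => d | 1%nat => 1 | _ => 0 end))
    by (intros; simpl; ring).
  rewrite IH, (sum_eq _ (fun k => geom rho k * (0 + mass M ^ n * (INR k - tmean M)
     + 0 * (INR k - tmean M) ^ 2 + 0 * (INR k - tmean M) ^ 3 + 0 * (INR k - tmean M) ^ 4)))
    by (intros; simpl; ring).
  rewrite geom_sum_central. ring.
Qed.

Lemma bcmom2_S M n : bcmom M (S n) 2 = cmom M 2 * mass M ^ n + mass M * bcmom M n 2.
Proof.
  rewrite (bcmom_S M n 2 (fun i d => match i with 0%nat => d ^ 2 | 1%nat => 2 * d | 2%nat => 1 | _ => 0 end))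
    by (intros; simpl; ring).
  rewrite bcmom1, (sum_eq _ (fun k => geom rho k * (bcmom M n 2 + 0 * (INR k - tmean M)
     + mass M ^ n * (INR k - tmean M) ^ 2 + 0 * (INR k - tmean M) ^ 3 + 0 * (INR k - tmean M) ^ 4)))
    by (intros; simpl; ring).
  rewrite geom_sum_central. ring.
Qed.

Lemma bcmom4_S M n : bcmom M (S n) 4 =
  cmom M 4 * mass M ^ n + 6 * cmom M 2 * bcmom M n 2 + mass M * bcmom M n 4.
Proof.
  rewrite (bcmom_S M n 4 (fun i d => match i with 0%nat => d ^ 4 | 1%nat => 4 * d ^ 3
                            | 2%nat => 6 * d ^ 2 | 3%nat => 4 * d | _ => 1 end))
    by (intros; simpl; ring).
  rewrite bcmom1, (sum_eq _ (fun k => geom rho k * (bcmom M n 4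
     + 4 * bcmom M n 3 * (INR k - tmean M) + 6 * bcmom M n 2 * (INR k - tmean M) ^ 2
     + 0 * (INR k - tmean M) ^ 3 + mass M ^ n * (INR k - tmean M) ^ 4)))
    by (intros; simpl; ring).
  rewrite geom_sum_central. ring.
Qed.

Lemma bcmom2_bounds M n : 0 <= bcmom M n 2 <= INR n * E2c.
Proof.
  pose proof (mass_bounds M). pose proof (cmom2_bounds M). pose proof cc_pos.
  induction n as [|n IH]; [unfold bcmom, sumW; simpl; lra|].
  rewrite bcmom2_S, S_INR.
  assert (0 <= mass M ^ n <= 1) by (split; [apply pow_le| apply pow_le_one]; lra).
  nra.
Qed.

Lemma bcmom4_bounds M n : 0 <= bcmom M n 4 <= INR n * E4c + 3 * INR n ^ 2 * E2c ^ 2.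
Proof.
  pose proof (mass_bounds M). pose proof (cmom2_bounds M). pose proof (cmom4_bounds M).
  pose proof cc_pos.
  induction n as [|n IH]; [unfold bcmom, sumW; simpl; lra|].
  rewrite bcmom4_S, S_INR. pose proof (bcmom2_bounds M n). pose proof (pos_INR n).
  assert (0 <= mass M ^ n <= 1) by (split; [apply pow_le| apply pow_le_one]; lra).
  assert (0 <= cmom M 2 * bcmom M n 2 <= E2c * (INR n * E2c)) by (split; nra).
  nra.
Qed.

(** Tangent line of [occ_mean n] at the mean particle number [n * tmean M], and
    the error of that linearisation. *)
Definition tden (M n : nat) : R := INR n * tmean M + INR n - 1.
Definition slope (M n : nat) : R := INR n * (INR n - 1) / tden M n ^ 2.
Definition icept (M n : nat) : R :=
  INR n - INR n * (INR n - 1) / tden M n - slope M n * (INR n * tmean M).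
Definition lin_err (M n t : nat) : R := occ_mean n t - slope M n * INR t - icept M n.

Definition Cslope : R := 4 * (mubar + 2) ^ 2.
Definition Berr : R := 16 * (E4c + 3 * E2c ^ 2) + 1.

Lemma slope_close M n : (1 <= n)%nat ->
  Rabs (slope M n - 1 / (1 + tmean M) ^ 2) <= Cslope / INR n.
Proof. intros Hn. apply tangent_slope_close; [exact Hn| apply tmean_bounds]. Qed.

(** The linearisation error has second moment bounded uniformly in [n] and [M]:
    it is [O((t - n mu)^2 / n)] and the fourth central moment is [O(n^2)]. *)
Lemma lin_err_var M n : (1 <= n)%nat -> sumW M n (fun t => lin_err M n t ^ 2) <= Berr.
Proof.
  intros Hn. destruct E_nonneg as [_ [HE2 HE4]].
  pose proof (tmean_bounds M). pose proof (mass_bounds M).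
  destruct (Nat.eqb_spec n 1) as [->|Hn1].
  - apply Rle_trans with (sumW M 1 (fun _ => 1)).
    + apply sumW_le. intros t. pose proof (occ_mean_bounds 1 t (le_n 1)).
      unfold lin_err, icept, slope. simpl INR in *.
      replace (1 * (1 - 1) / tden M 1 ^ 2) with 0 by (unfold Rdiv; ring).
      replace (1 * (1 - 1) / tden M 1) with 0 by (unfold Rdiv; ring).
      replace (occ_mean 1 t - 0 * INR t - (1 - 0 - 0 * (1 * tmean M)))
        with (occ_mean 1 t - 1) by ring. nra.
    + rewrite sumW_const. simpl. unfold Berr. nra.
  - assert (Hn2 : 2 <= INR n) by (apply (le_INR 2); lia).
    eapply Rle_trans.
    + apply (sumW_le _ _ _ (fun t => 16 / INR n ^ 2 * (INR t - INR n * tmean M) ^ 4)).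
      intros t. apply (occ_mean_tangent (INR n) (INR t) (tmean M)); auto. apply pos_INR. lra.
    + rewrite sumW_scal. fold (bcmom M n 4). pose proof (bcmom4_bounds M n).
      apply Rle_trans with (16 / INR n ^ 2 * (INR n * E4c + 3 * INR n ^ 2 * E2c ^ 2)).
      * apply Rmult_le_compat_l; [|lra].
        apply Rmult_le_pos; [lra| apply Rlt_le, Rinv_0_lt_compat, pow_lt; lra].
      * replace (16 / INR n ^ 2 * (INR n * E4c + 3 * INR n ^ 2 * E2c ^ 2)) with
          (16 * (E4c / INR n) + 48 * E2c ^ 2) by (field; lra).
        assert (E4c / INR n <= E4c).
        { apply Rmult_le_reg_r with (INR n); [lra|].
          unfold Rdiv. rewrite Rmult_assoc, Rinv_l by lra. nra. }
        unfold Berr. lra.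
Qed.

Lemma blocksum_local n : forall a xi xi',
  (forall x, (a <= x < a + Z.of_nat n)%Z -> xi x = xi' x) -> blocksum xi a n = blocksum xi' a n.
Proof.
  induction n as [|m IH]; intros a xi xi' H; simpl; auto.
  rewrite (H a) by lia. f_equal. apply IH. intros; apply H; lia.
Qed.

(** Independence of disjoint blocks: if [y] is centred and has second moment at
    most [B] under the block law, then [sum_j y(S_j)] has second moment at most [L B]. *)
Lemma blocks_second_moment M K L a (y : nat -> R) B :
  sumW M K y = 0 -> sumW M K (fun t => y t ^ 2) <= B ->
  forall eta, wsum rho M a (L * K) (fun xi => (rsum (fun j => y (blockS xi a K j)) L) ^ 2) eta
              <= INR L * B.
Proof.
  intros Hy HB. pose proof (mass_bounds M) as Hp. pose proof cc_pos.
  assert (HB0 : 0 <= B) by (eapply Rle_trans; [|apply HB]; apply sumW_nonneg; intros; apply pow2_ge_0).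
  induction L as [|L IH]; intros eta; [simpl; lra|].
  replace (S L * K)%nat with (L * K + K)%nat by lia. rewrite wsum_add.
  set (Y := fun xi => rsum (fun j => y (blockS xi a K j)) L).
  eapply Rle_trans.
  - apply (wsum_le M (L * K) a _ (fun xi0 => mass M ^ K * Y xi0 ^ 2 + B)).
    intros xi0.
    rewrite (wsum_ext_local _ _ _ _ (fun xi => Y xi0 ^ 2
        + (2 * Y xi0) * y (blocksum xi (a + Z.of_nat (L * K)) K)
        + y (blocksum xi (a + Z.of_nat (L * K)) K) ^ 2)).
    2:{ intros xi Hxi. simpl rsum. unfold Y.
        rewrite (rsum_ext _ (fun j => y (blockS xi0 a K j))); [unfold blockS; ring|].
        intros j Hj. unfold blockS. f_equal. apply blocksum_local. intros x Hx. apply Hxi. nia. }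
    rewrite !wsum_plus, wsum_const, wsum_scal.
    rewrite (wsum_sumW M K _ y), (wsum_sumW M K _ (fun t => y t ^ 2)), Hy. lra.
  - rewrite wsum_plus, wsum_scal, wsum_const. specialize (IH eta).
    assert (0 <= mass M ^ K <= 1) by (split; [apply pow_le| apply pow_le_one]; lra).
    assert (0 <= mass M ^ (L * K) <= 1) by (split; [apply pow_le| apply pow_le_one]; lra).
    assert (0 <= wsum rho M a (L * K) (fun xi => Y xi ^ 2) eta)
      by (apply wsum_nonneg; intros; apply pow2_ge_0).
    assert (IHY : wsum rho M a (L * K) (fun xi => Y xi ^ 2) eta <= INR L * B) by exact IH.
    rewrite S_INR. nra.
Qed.

Definition err_mean (M K : nat) : R := sumW M K (lin_err M K) / mass M ^ K.
Definition cerr (M K t : nat) : R := lin_err M K t - err_mean M K.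

Lemma cerr_moments M K : (1 <= K)%nat ->
  sumW M K (cerr M K) = 0 /\ sumW M K (fun t => cerr M K t ^ 2) <= Berr.
Proof.
  intros HK. pose proof (mass_bounds M). pose proof cc_pos.
  assert (HpK : 0 < mass M ^ K) by (apply pow_lt; lra).
  assert (Hc : sumW M K (cerr M K) = 0).
  { unfold cerr. rewrite (sumW_ext _ _ _ (fun t => lin_err M K t + (- err_mean M K) * 1)) by (intros; ring).
    rewrite sumW_plus, sumW_scal, sumW_const. unfold err_mean. field. lra. }
  split; [exact Hc|].
  eapply Rle_trans; [|apply (lin_err_var M K HK)].
  rewrite (sumW_ext _ _ (fun t => lin_err M K t ^ 2)
     (fun t => cerr M K t ^ 2 + (2 * err_mean M K * cerr M K t + err_mean M K ^ 2 * 1)))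
    by (intros; unfold cerr; ring).
  rewrite !sumW_plus, !sumW_scal, Hc, sumW_const.
  pose proof (pow2_ge_0 (err_mean M K)). nra.
Qed.

Lemma V2_decomp M a K L eta : (1 <= K)%nat -> (1 <= L)%nat ->
  V2 rho a K L eta =
    rsum (fun j => cerr M K (blockS eta a K j)) L
    - lin_err M (L * K) (blocksum eta a (L * K))
    + (slope M K - slope M (L * K)) * (INR (blocksum eta a (L * K)) - INR (L * K) * tmean M)
    + (INR L * (err_mean M K + icept M K) - icept M (L * K)
       + (slope M K - slope M (L * K)) * (INR (L * K) * tmean M)).
Proof.
  intros HK HL. rewrite V2_occ_mean by auto.
  rewrite (rsum_ext _ (fun j => cerr M K (blockS eta a K j)
                                - (- (err_mean M K + icept M K)) - (- slope M K) * INR (blockS eta a K j)))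
    by (intros; unfold cerr, lin_err; ring).
  rewrite rsum_affine, <- blocksum_blocks. unfold lin_err. ring.
Qed.

Lemma slope_gap M K L : (1 <= K)%nat -> (1 <= L)%nat ->
  (slope M K - slope M (L * K)) ^ 2 <= 4 * Cslope ^ 2 / INR K ^ 2.
Proof.
  intros HK HL. pose proof (slope_close M K HK). pose proof (slope_close M (L * K) ltac:(nia)).
  assert (HK1 : 1 <= INR K) by (apply (le_INR 1); auto).
  assert (HCs : 0 <= Cslope) by (unfold Cslope; pose proof (pow2_ge_0 (mubar + 2)); lra).
  assert (Cslope / INR (L * K) <= Cslope / INR K).
  { unfold Rdiv. apply Rmult_le_compat_l; auto. apply Rinv_le_contravar; [lra|].
    apply le_INR. nia. }
  assert (Hgap : Rabs (slope M K - slope M (L * K)) <= 2 * Cslope / INR K).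
  { replace (slope M K - slope M (L * K)) with
      ((slope M K - 1 / (1 + tmean M) ^ 2) - (slope M (L * K) - 1 / (1 + tmean M) ^ 2)) by ring.
    eapply Rle_trans; [apply Rabs_triang|]. rewrite Rabs_Ropp. unfold Rdiv in *. lra. }
  rewrite <- pow2_abs. replace (4 * Cslope ^ 2 / INR K ^ 2) with ((2 * Cslope / INR K) ^ 2) by (field; lra).
  apply pow_incr. split; [apply Rabs_pos| exact Hgap].
Qed.

(** The slope mismatch times the centred particle number of the big box has
    second moment [O(1/K^2) * O(LK) = O(L)]. *)
Lemma slope_term_bound M K L : (1 <= K)%nat -> (1 <= L)%nat ->
  (slope M K - slope M (L * K)) ^ 2 * bcmom M (L * K) 2 <= 4 * Cslope ^ 2 * E2c * INR L.
Proof.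
  intros HK HL. pose proof (slope_gap M K L HK HL) as Hdl. pose proof (bcmom2_bounds M (L * K)) as HA.
  destruct E_nonneg as [_ [HE2 _]].
  assert (HK1 : 1 <= INR K) by (apply (le_INR 1); auto).
  rewrite mult_INR in HA.
  apply Rle_trans with (4 * Cslope ^ 2 / INR K ^ 2 * (INR L * INR K * E2c)).
  - apply Rmult_le_compat; [apply pow2_ge_0| lra| lra| lra].
  - replace (4 * Cslope ^ 2 / INR K ^ 2 * (INR L * INR K * E2c))
      with (4 * Cslope ^ 2 * E2c * INR L / INR K) by (field; lra).
    assert (0 <= 4 * Cslope ^ 2 * E2c * INR L).
    { apply Rmult_le_pos; [|apply pos_INR]. apply Rmult_le_pos; [|lra].
      apply Rmult_le_pos; [lra| apply pow2_ge_0]. }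
    apply Rmult_le_reg_r with (INR K); [lra|]. unfold Rdiv.
    rewrite Rmult_assoc, Rinv_l by lra. nra.
Qed.

Definition Cfin : R := 6 * Berr + 12 * Cslope ^ 2 * E2c.

(** The variance bound at a fixed truncation level [M], around a suitable centre:
    by [(A - B + C)^2 <= 3 (A^2 + B^2 + C^2)] and the three bounds above. *)
Lemma truncated_variance M K L a : (1 <= K)%nat -> (1 <= L)%nat ->
  exists c, box_exp rho M a (L * K) (fun eta => (V2 rho a K L eta - c) ^ 2) <= Cfin * INR L.
Proof.
  intros HK HL. set (n := (L * K)%nat). set (dl := slope M K - slope M n).
  exists (INR L * (err_mean M K + icept M K) - icept M n + dl * (INR n * tmean M)).
  unfold box_exp. eapply Rle_trans.
  - apply (wsum_le M n a _ (fun eta =>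
       3 * (rsum (fun j => cerr M K (blockS eta a K j)) L) ^ 2
       + (3 * lin_err M n (blocksum eta a n) ^ 2
          + 3 * dl ^ 2 * (INR (blocksum eta a n) - INR n * tmean M) ^ 2))).
    intros eta. rewrite (V2_decomp M) by auto. fold n dl.
    set (A := rsum (fun j => cerr M K (blockS eta a K j)) L).
    set (B := lin_err M n (blocksum eta a n)).
    set (D := INR (blocksum eta a n) - INR n * tmean M).
    pose proof (pow2_ge_0 (A + B)). pose proof (pow2_ge_0 (A - dl * D)).
    pose proof (pow2_ge_0 (B + dl * D)). nra.
  - rewrite !wsum_plus, !wsum_scal.
    rewrite (wsum_sumW M n a (fun t => lin_err M n t ^ 2)).
    rewrite (wsum_sumW M n a (fun t => (INR t - INR n * tmean M) ^ 2)). fold (bcmom M n 2).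
    destruct (cerr_moments M K HK) as [Hc Hc2].
    pose proof (blocks_second_moment M K L a (cerr M K) Berr Hc Hc2 zero_conf) as HV.
    pose proof (lin_err_var M n ltac:(unfold n; nia)) as HZ.
    pose proof (slope_term_bound M K L HK HL) as HS. fold n dl in HV, HS.
    assert (HL1 : 1 <= INR L) by (apply (le_INR 1); auto).
    assert (0 <= Berr) by (eapply Rle_trans; [|apply HZ]; apply sumW_nonneg; intros; apply pow2_ge_0).
    unfold Cfin. nra.
Qed.

Lemma box_exp_cv_bounded a n F B : (forall eta, Rabs (F eta) <= B) ->
  exists m, Un_cv (fun N => box_exp rho N a n F) m.
Proof.
  intros HF. assert (HFB : forall eta, - B <= F eta <= B).
  { intros eta. specialize (HF eta). pose proof (Rle_abs (F eta)).
    pose proof (Rle_abs (- F eta)). rewrite Rabs_Ropp in *. lra. }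
  set (U := fun N => box_exp rho N a n (fun eta => F eta + B)).
  assert (HUg : Un_growing U).
  { intros N. apply wsum_mono_trunc. intros xi. specialize (HFB xi). lra. }
  assert (HUb : has_ub U).
  { exists (2 * B). intros x [N ->]. unfold U, box_exp.
    eapply Rle_trans; [apply (wsum_le N n a _ (fun _ => 2 * B)); intros xi; specialize (HFB xi); lra|].
    rewrite wsum_const. pose proof (mass_bounds N). pose proof cc_pos.
    assert (0 <= mass N ^ n <= 1) by (split; [apply pow_le| apply pow_le_one]; lra).
    assert (0 <= B) by (specialize (HFB zero_conf); lra). nra. }
  destruct (growing_cv U HUg HUb) as [l Hl]. exists (l - B * 1 ^ n).
  apply (Un_cv_ext (fun N => U N - B * mass N ^ n)).
  - intros N. unfold U, box_exp. rewrite wsum_plus, wsum_const. ring.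
  - apply CV_minus; [exact Hl| apply CV_mult; [apply cv_const| apply cv_pow, mass_cv]].
Qed.

Lemma box_exp_sq_shift M a n F c :
  box_exp rho M a n (fun eta => (F eta - c) ^ 2) =
  box_exp rho M a n (fun eta => F eta ^ 2) - 2 * c * box_exp rho M a n F + c ^ 2 * mass M ^ n.
Proof.
  unfold box_exp. rewrite (wsum_ext _ _ _ _ (fun eta => F eta ^ 2 + ((-2 * c) * F eta + c ^ 2)))
    by (intros; ring).
  rewrite !wsum_plus, wsum_scal, wsum_const. ring.
Qed.

Lemma second_moment_at_limit a n F m D :
  Un_cv (fun N => box_exp rho N a n F) m ->
  (forall M, exists c, box_exp rho M a n (fun eta => (F eta - c) ^ 2) <= D) ->
  forall N, box_exp rho N a n (fun eta => (F eta - m) ^ 2) <= D.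
Proof.
  intros Hm HD N. pose proof cc_pos.
  assert (Hcn : 0 < cc ^ n) by (apply pow_lt; lra).
  set (gap := fun M => (box_exp rho M a n F - m * mass M ^ n) ^ 2 / cc ^ n).
  apply (le_of_vanishing _ D gap N).
  - unfold gap. replace 0 with ((m - m * 1 ^ n) ^ 2 * / cc ^ n) by (rewrite pow1; ring).
    apply CV_mult; [apply cv_pow, CV_minus; [exact Hm| apply CV_mult; [apply cv_const| apply cv_pow, mass_cv]]|].
    apply cv_const.
  - intros M HNM. eapply Rle_trans; [apply wsum_mono_trunc_le; [exact HNM| intros; apply pow2_ge_0]|].
    fold (box_exp rho M a n (fun eta => (F eta - m) ^ 2)).
    destruct (HD M) as [c Hc]. rewrite box_exp_sq_shift in *.
    pose proof (mass_bounds M).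
    assert (HP : cc ^ n <= mass M ^ n) by (apply pow_incr; lra).
    assert (HPpos : 0 < mass M ^ n) by lra.
    pose proof (recentre_second_moment (box_exp rho M a n (fun eta => F eta ^ 2))
                  (box_exp rho M a n F) (mass M ^ n) c m HPpos).
    assert ((box_exp rho M a n F - m * mass M ^ n) ^ 2 / mass M ^ n <= gap M).
    { unfold gap, Rdiv. apply Rmult_le_compat_l; [apply pow2_ge_0|]. apply Rinv_le_contravar; lra. }
    lra.
Qed.

End TruncatedProductMeasure.

(** [Var(V_2, nu_rho) <= C L]: the mean [m] exists since [|V_2| <= LK], and the
    truncated variance bound passes to the limiting mean. *)
Theorem mainTheorem11 (rho : R) (Hrho : 0 < rho) :
  exists C : R,
    forall (K L : nat) (a : Z), (0 < K)%nat -> (0 < L)%nat ->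
      exists m : R,
        Un_cv (fun N => box_exp rho N a (L * K) (V2 rho a K L)) m /\
        (forall N : nat,
           box_exp rho N a (L * K) (fun eta => (V2 rho a K L eta - m) ^ 2) <= C * INR L).
Proof.
  exists (Cfin rho). intros K L a HK HL.
  destruct (box_exp_cv_bounded rho Hrho a (L * K) (V2 rho a K L) (INR (L * K)))
    as [m Hm]; [intros; apply V2_bound; auto|].
  exists m. split; [exact Hm|].
  apply (second_moment_at_limit rho Hrho a (L * K) (V2 rho a K L) m); [exact Hm|].
  intros M. apply truncated_variance; auto.
Qed.
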